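(* Let $r\ge1$, $\mathbf{m}\in\mathbb{N}^r$, $m=m_1+\cdots+m_r$, $\mathbf{f}\in\mathbb{C}^r$ and $a,b,c\in\mathbb{C}$ with $(c-a-m)_{m}\ne0$, $(c-b-m)_{m}\ne0$, $(1+a+b-c)_m\ne0$. Put $C_{k,r}=\frac{(-1)^k}{k!}{}_{r+1}F_{r}\!\left(\begin{matrix}-k,\mathbf{f}+\mathbf{m}\\\mathbf{f}\end{matrix}\right)$ and $$ \hat{Q}_m(t)=\sum_{k=0}^{m}\frac{(-1)^kC_{k,r}(a)_k(b)_k(t)_k}{(c-a-m)_k(c-b-m)_k}\, {}_{3}F_{2}\!\left(\begin{matrix}-m+k,\,t+k,\,c-a-b-m\\ c-a-m+k,\,c-b-m+k\end{matrix}\right), $$ $$ \hat{P}_m(t)=\sum_{k=0}^m\frac{(-1)^k(a)_k(-b-m)_k(t)_k(c-a-m-t)_{m-k}}{(c-a-m)_m(c-b-m)_k\,k!}\, {}_{r+2}F_{r+1}\!\left(\begin{matrix}-k,b,\mathbf{f}+\mathbf{m}\\ b+m-k+1,\mathbf{f}\end{matrix}\right). $$ Then $\hat{Q}_m(t)=\hat{P}_m(t)$ identically in $t$.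
   Context: $(a)_k=\Gamma(a+k)/\Gamma(a)$. $\mathbf{f}+\mathbf{m}$ is componentwise; a vector among hypergeometric parameters means its components are listed. ${}_pF_q(\mathbf{a};\mathbf{b})$ denotes the terminating generalized hypergeometric series at argument $1$. *)

From HB Require Import structures.
From mathcomp Require Import all_boot all_order all_algebra.
From mathcomp Require Import complex.
From mathcomp Require Import reals.
Set Implicit Arguments. Unset Strict Implicit. Unset Printing Implicit Defensive.
Import Order.TTheory GRing.Theory Num.Theory.
Local Open Scope ring_scope.

Definition poch {F : ringType} (x : F) (k : nat) : F :=
  \prod_(i < k) (x + i%:R).

(* Terminating generalized hypergeometric series at argument 1,
   summed over n = 0 .. N, where N is the termination index (one numerator
   parameter equals -N, so all terms with n > N vanish). *)
Definition hypF {F : fieldType} (N : nat) (as_ bs : seq F) : F :=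
  \sum_(n < N.+1)
     (\prod_(a <- as_) poch a n) / (\prod_(b <- bs) poch b n) / (n`!)%:R.

From HB Require Import structures.
From mathcomp Require Import all_boot all_order all_algebra.
From mathcomp Require Import complex.
From mathcomp Require Import reals.
From mathcomp Require Import ring zify.

Set Implicit Arguments.
Unset Strict Implicit.
Unset Printing Implicit Defensive.

Import Order.TTheory GRing.Theory Num.Theory.
Local Open Scope ring_scope.

(* Both sides are linear in the weights w_n = prod (f + m)_n / prod (f)_n.  Up to the
   factor (-1)^k / k!, C_k is the binomial transform of w, so binomial inversion gives
   w_n = sum_j C(n, j) j! C_j, and substituting this into P_m turns both sides into
   sums sum_j C_j T_j.  On the Q side T_j comes out of the 3F2 after two Chu-Vandermonde
   summations; on the P side one Chu-Vandermonde summation evaluates the coefficient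
   sum of the (r+2)F(r+1), and the reflection (b + m - k + 1)_k = (-1)^k (-b - m)_k
   matches the prefactor.  The identity therefore holds for every weight sequence w. *)

Section Sums.
Context {M : nmodType}.

Lemma sum_ord_widen0 (n1 n2 : nat) (G : nat -> M) : (n1 <= n2)%N ->
  (forall i, (n1 <= i)%N -> G i = 0) -> \sum_(i < n2) G i = \sum_(i < n1) G i.
Proof.
move=> le12 G0; rewrite -!(big_mkord xpredT) (big_cat_nat (leq0n n1) le12) /=.
by rewrite [X in _ + X]big_nat_cond [X in _ + X]big1 ?addr0 // => i /andP[/andP[/G0]].
Qed.

Lemma sum_ord_shift0 (j n : nat) (G : nat -> M) : (j <= n)%N ->
  (forall i, (i < j)%N -> G i = 0) -> \sum_(i < n) G i = \sum_(i < n - j) G (j + i)%N.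
Proof.
move=> le_jn G0; rewrite -!(big_mkord xpredT) (big_cat_nat (leq0n j) le_jn) /=.
rewrite big_nat_cond big1 ?add0r => [|i /andP[/andP[_ /G0]]] //.
by rewrite -{1}(add0n j) big_addn big_mkord; apply: eq_bigr => i _; rewrite addnC.
Qed.

End Sums.

Lemma bin_trinomial_revision (k j i : nat) :
  ('C(k, j + i) * 'C(j + i, j) = 'C(k, j) * 'C(k - j, i))%N.
Proof.
have [le_jik | lt_kji] := leqP (j + i) k; last first.
  rewrite bin_small // mul0n; have [le_jk | lt_kj] := leqP j k; last by rewrite bin_small.
  by rewrite (@bin_small (k - j) i) ?muln0 //; lia.
have le_jk : (j <= k)%N by lia.
have le_ik : (i <= k - j)%N by lia.
have facts_gt0 : (0 < j`! * i`! * (k - j - i)`!)%N by rewrite !muln_gt0 !fact_gt0.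
apply/eqP; rewrite -(eqn_pmul2r facts_gt0); apply/eqP.
(* both sides, multiplied by j! i! (k - j - i)!, equal k! *)
transitivity k`!.
  by rewrite -(bin_fact le_jik) -(bin_fact (leq_addr i j)) addKn subnDA; ring.
by rewrite -(bin_fact le_jk) -(bin_fact le_ik); ring.
Qed.

Section BinomialSums.
Variable R : comNzRingType.

Lemma sum_binS (N : nat) (G : nat -> R) :
  \sum_(s < N.+2) 'C(N.+1, s)%:R * G s
  = \sum_(s < N.+1) 'C(N, s)%:R * (G s + G s.+1).
Proof.
under [RHS]eq_bigr do rewrite mulrDr.
rewrite big_split big_ord_recl [X in _ = X + _]big_ord_recl /= !bin0.
under eq_bigr do rewrite /bump /= add1n binS natrD mulrDl.
rewrite big_split /= addrA; congr (_ + _).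
by rewrite big_ord_recr /= bin_small // mul0r addr0.
Qed.

Lemma sum_bin_trinomial (k j : nat) (G : nat -> R) :
  \sum_(n < k.+1) 'C(k, n)%:R * 'C(n, j)%:R * G n
  = 'C(k, j)%:R * \sum_(i < (k - j).+1) 'C(k - j, i)%:R * G (j + i)%N.
Proof.
have [le_jk | lt_kj] := leqP j k; last first.
  rewrite bin_small // mul0r big1 // => n _.
  by rewrite (@bin_small n j) ?mulr0 ?mul0r // (leq_trans (ltn_ord n)).
rewrite (@sum_ord_shift0 _ j _ (fun n => 'C(k, n)%:R * 'C(n, j)%:R * G n) (leqW le_jk));
  last by move=> n lt_nj; rewrite (bin_small lt_nj) mulr0 mul0r.
rewrite subSn // mulr_sumr; apply: eq_bigr => i _.
by rewrite -natrM bin_trinomial_revision natrM mulrA.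
Qed.

Lemma sum_bin_bin_sign (M n l : nat) : (n <= M)%N ->
  \sum_(j < M.+1) 'C(n, j)%:R * 'C(j, l)%:R * (-1) ^+ j = (-1) ^+ l * (n == l)%:R :> R.
Proof.
move=> le_nM.
rewrite (@sum_ord_widen0 _ n.+1 M.+1 (fun j => 'C(n, j)%:R * 'C(j, l)%:R * (-1) ^+ j) le_nM);
  last by move=> j lt_nj; rewrite bin_small // !mul0r.
rewrite (sum_bin_trinomial _ _ (fun j => (-1) ^+ j)).
under eq_bigr do rewrite exprD mulrCA.
rewrite -mulr_sumr.
have -> : \sum_(i < (n - l).+1) 'C(n - l, i)%:R * (-1) ^+ i = (1 - 1) ^+ (n - l) :> R.
  by rewrite exprBn; apply: eq_bigr => i _; rewrite !expr1n !mulr1 mulr_natl.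
rewrite subrr expr0n subn_eq0 mulrCA.
have [-> | ne_nl] := eqVneq n l; first by rewrite binn leqnn mul1r.
have [le_nl | lt_ln] := leqP n l; last by rewrite mulr0.
by rewrite bin_small ?mul0r // ltn_neqAle ne_nl.
Qed.

Lemma binomial_inversion (w : nat -> R) (M n : nat) : (n <= M)%N ->
  \sum_(j < M.+1) 'C(n, j)%:R * (-1) ^+ j *
     \sum_(l < M.+1) 'C(j, l)%:R * (-1) ^+ l * w l = w n.
Proof.
move=> le_nM.
transitivity (\sum_(l < M.+1) w l * (-1) ^+ l * ((-1) ^+ l * (n == l)%:R)).
  under eq_bigr do rewrite mulr_sumr.
  rewrite exchange_big; apply: eq_bigr => l _.
  by rewrite -(sum_bin_bin_sign l le_nM) mulr_sumr; apply: eq_bigr => j _; ring.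
rewrite (bigD1 (Ordinal (le_nM : (n < M.+1)%N))) //= big1 ?addr0 => [|l].
  by rewrite eqxx mulr1 -mulrA -expr2 sqrr_sign mulr1.
move=> ne_l; have /negbTE -> : n != l.
  by apply: contra ne_l => /eqP e; apply/eqP/val_inj; rewrite /= e.
by rewrite !mulr0.
Qed.

End BinomialSums.

Section Pochhammer.
Variable R : comNzRingType.
Implicit Types x y u : R.

Lemma poch0 x : poch x 0 = 1.
Proof. by rewrite /poch big_ord0. Qed.

Lemma pochS x k : poch x k.+1 = poch x k * (x + k%:R).
Proof. by rewrite /poch big_ord_recr. Qed.

Lemma pochSl x k : poch x k.+1 = x * poch (x + 1) k.
Proof.
rewrite /poch big_ord_recl /= addr0; congr (_ * _).
by apply: eq_bigr => i _; rewrite /bump /= add1n -natr1 addrA addrAC.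
Qed.

Lemma pochD x k l : poch x (k + l) = poch x k * poch (x + k%:R) l.
Proof.
elim: l => [|l IH]; first by rewrite addn0 poch0 mulr1.
by rewrite addnS !pochS IH natrD addrA mulrA.
Qed.

Lemma poch_split x k n : (k <= n)%N -> poch x n = poch x k * poch (x + k%:R) (n - k).
Proof. by move=> kn; rewrite -pochD subnKC. Qed.

Lemma poch_opp_nat (k n : nat) : poch (- k%:R) n = (-1) ^+ n * (k ^_ n)%:R :> R.
Proof.
elim: n => [|n IH]; first by rewrite poch0 ffactn0 mulr1.
rewrite pochS IH ffactnSr natrM exprS.
have [nk | kn] := leqP n k; first by rewrite natrB //; ring.
by rewrite ffact_small // !(mul0r, mulr0).
Qed.

Lemma poch_opp_nat_small (k n : nat) : (k < n)%N -> poch (- k%:R) n = 0 :> R.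
Proof. by move=> kn; rewrite poch_opp_nat ffact_small // mulr0. Qed.

Lemma poch_reflect x k : poch (x - k%:R + 1) k = (-1) ^+ k * poch (- x) k.
Proof.
rewrite -[in (-1) ^+ k](card_ord k) -prodr_const /poch (reindex_inj rev_ord_inj).
rewrite -big_split /=; apply: eq_bigr => i _.
by rewrite natrB -?natr1 ?ltn_ord; ring.
Qed.

Lemma chu_vandermonde (N : nat) u y : poch (y - u) N =
  \sum_(s < N.+1) 'C(N, s)%:R * (-1) ^+ s * poch u s * poch (y + s%:R) (N - s).
Proof.
elim: N y => [|N IH] y.
  by rewrite big_ord_recl big_ord0 /= !poch0 bin0 expr0 !mulr1 addr0.
pose T s := (-1) ^+ s * poch u s * poch (y + s%:R) (N.+1 - s).
transitivity (\sum_(s < N.+2) 'C(N.+1, s)%:R * T s); last first.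
  by apply: eq_bigr => s _; rewrite /T !mulrA.
rewrite sum_binS pochSl (_ : y - u + 1 = (y + 1) - u) ?IH; last by ring.
rewrite mulr_sumr; apply: eq_bigr => s _; have sN : (s <= N)%N by rewrite -ltnS.
(* split y - u as (y + s) - (u + s): each half extends one of the two Pochhammer factors *)
rewrite /T subSS subSn // (pochS u s) (pochSl (y + s%:R)) -natr1 exprS.
rewrite [y + 1 + _]addrAC [y + (_ + 1)]addrA; ring.
Qed.

Lemma chu_vandermonde_bin (k j : nat) u y :
  \sum_(n < k.+1) 'C(k, n)%:R * 'C(n, j)%:R * (-1) ^+ n * poch u n * poch (y + n%:R) (k - n)
  = 'C(k, j)%:R * (-1) ^+ j * poch u j * poch (y - u) (k - j).
Proof.
pose G n := (-1) ^+ n * poch u n * poch (y + n%:R) (k - n).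
transitivity (\sum_(n < k.+1) 'C(k, n)%:R * 'C(n, j)%:R * G n).
  by apply: eq_bigr => n _; rewrite /G !mulrA.
rewrite sum_bin_trinomial -!mulrA; congr (_ * _).
rewrite (_ : y - u = (y + j%:R) - (u + j%:R)) ?chu_vandermonde; last by ring.
rewrite !mulr_sumr; apply: eq_bigr => i _.
by rewrite /G pochD exprD natrD subnDA addrA; ring.
Qed.

Lemma poch_nat_ffact (N i : nat) :
  poch (N%:R - i%:R + 1) i = (N ^_ i)%:R :> R.
Proof. by rewrite poch_reflect poch_opp_nat signrMK. Qed.

End Pochhammer.

Section PochhammerNonzero.
Variable R : idomainType.
Implicit Types x : R.

Lemma poch_split_neq0 x k n : (k <= n)%N -> poch x n != 0 ->
  poch x k != 0 /\ poch (x + k%:R) (n - k) != 0.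
Proof. by move=> le_kn; rewrite (poch_split x le_kn) mulf_eq0 negb_or => /andP. Qed.

Lemma poch_neq0_le x k n : (k <= n)%N -> poch x n != 0 -> poch x k != 0.
Proof. by move=> le_kn /(poch_split_neq0 le_kn) []. Qed.

Lemma poch_shift_neq0 x j k n : (j + k <= n)%N -> poch x n != 0 -> poch (x + j%:R) k != 0.
Proof.
have le_jn : (j + k <= n -> j <= n)%N by apply: leq_trans; rewrite leq_addr.
move=> le_jkn /(poch_split_neq0 (le_jn le_jkn)) [_].
by apply: poch_neq0_le; rewrite leq_subRL ?le_jn.
Qed.

End PochhammerNonzero.

Section PochhammerField.
Variable F : numFieldType.
Implicit Types x y u : F.

Lemma natr_fact_neq0 n : n`!%:R != 0 :> F.
Proof. by rewrite pnatr_eq0 -lt0n fact_gt0. Qed.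

Lemma poch_opp_nat_div_fact (k n : nat) :
  poch (- k%:R) n / n`!%:R = (-1) ^+ n * 'C(k, n)%:R :> F.
Proof. by rewrite poch_opp_nat -bin_ffact natrM mulrA mulfK ?natr_fact_neq0. Qed.

Lemma chu_vandermonde_div (n : nat) u y : poch y n != 0 ->
  poch (y - u) n / poch y n =
  \sum_(i < n.+1) 'C(n, i)%:R * (-1) ^+ i * poch u i / poch y i.
Proof.
move=> yn; rewrite chu_vandermonde mulr_suml; apply: eq_bigr => i _.
have le_in : (i <= n)%N by rewrite -ltnS.
have [yi yin] := poch_split_neq0 le_in yn.
by rewrite (poch_split y le_in); field; apply/andP.
Qed.

(* The paper's C_{k,r}, with the weights prod (f + m)_n / prod (f)_n replaced by an
   arbitrary sequence w. *)
Definition Cseq (w : nat -> F) (k : nat) : F :=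
  (-1) ^+ k / k`!%:R * \sum_(l < k.+1) poch (- k%:R) l / l`!%:R * w l.

Lemma Cseq_inversion (w : nat -> F) (M n : nat) : (n <= M)%N ->
  w n = \sum_(j < M.+1) 'C(n, j)%:R * j`!%:R * Cseq w j.
Proof.
move=> le_nM; rewrite -{1}(binomial_inversion w le_nM); apply: eq_bigr => j _.
rewrite /Cseq (@sum_ord_widen0 _ j.+1 M.+1 (fun l => 'C(j, l)%:R * (-1) ^+ l * w l));
  [|exact: ltn_ord|by move=> l lt_jl; rewrite bin_small // !mul0r].
under [in RHS]eq_bigr do rewrite poch_opp_nat_div_fact [_ * 'C(_, _)%:R]mulrC.
by field; apply: natr_fact_neq0.
Qed.

End PochhammerField.

Section QhatPhat.
Variable F : numFieldType.
Variables (a b c t : F) (m : nat).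
Hypothesis b1_neq0 : poch (b + 1) m != 0.
Hypothesis cam_neq0 : poch (c - a - m%:R) m != 0.
Hypothesis cbm_neq0 : poch (c - b - m%:R) m != 0.

(* P_m(t) = sum_k phat_prefactor k * sum_n phat_term k n * w_n, and coef_C j is the
   common coefficient T_j of C_j in both sides. *)
Definition phat_prefactor (k : nat) : F :=
  (-1) ^+ k * poch a k * poch (- b - m%:R) k * poch t k * poch (c - a - m%:R - t) (m - k)
    / (poch (c - a - m%:R) m * poch (c - b - m%:R) k * k`!%:R).

Definition phat_term (k n : nat) : F :=
  poch (- k%:R) n * poch b n / (poch (b + m%:R - k%:R + 1) n * n`!%:R).

Definition coef_C (j : nat) : F :=
  (-1) ^+ j * poch b j / poch (c - a - m%:R) m *
  \sum_(i < (m - j).+1) 'C(m - j, i)%:R * poch a (j + i) * poch t (j + i)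
       * poch (c - a - m%:R - t) (m - j - i) / poch (c - b - m%:R) (j + i).

Lemma phat_denom_neq0 (k n : nat) : (n <= k)%N -> (k <= m)%N ->
  poch (b + m%:R - k%:R + 1) n != 0.
Proof.
move=> le_nk le_km.
rewrite (_ : b + m%:R - k%:R + 1 = b + 1 + (m - k)%:R); last by rewrite natrB //; ring.
by apply: poch_shift_neq0 b1_neq0; lia.
Qed.

Lemma sum_phat_term_bin (k j : nat) : (k <= m)%N ->
  \sum_(n < m.+1) phat_term k n * 'C(n, j)%:R * j`!%:R =
  j`!%:R * 'C(k, j)%:R * (-1) ^+ j * poch b j * poch (m%:R - k%:R + 1) (k - j)
    / poch (b + m%:R - k%:R + 1) k.
Proof.
move=> le_km.
rewrite (@sum_ord_widen0 _ k.+1 m.+1 (fun n => phat_term k n * 'C(n, j)%:R * j`!%:R)) //;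
  last by move=> n lt_kn; rewrite /phat_term poch_opp_nat_small // !mul0r.
set B := b + m%:R - k%:R + 1.
have Bk : poch B k != 0 by apply: phat_denom_neq0.
rewrite (_ : m%:R - k%:R + 1 = B - b); last by rewrite /B; ring.
rewrite [RHS](_ : _ = j`!%:R / poch B k *
  ('C(k, j)%:R * (-1) ^+ j * poch b j * poch (B - b) (k - j))); last by ring.
rewrite -chu_vandermonde_bin mulr_sumr.
apply: eq_bigr => n _; have le_nk : (n <= k)%N by rewrite -ltnS.
have [Bn Bnk] := poch_split_neq0 le_nk Bk.
rewrite /phat_term (poch_split B le_nk) -[poch (- k%:R) n](divfK (natr_fact_neq0 F n)).
by rewrite poch_opp_nat_div_fact; field; rewrite natr_fact_neq0 Bn Bnk.
Qed.

Lemma phat_coefE (j : nat) : (j <= m)%N ->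
  \sum_(k < m.+1) phat_prefactor k * \sum_(n < m.+1) phat_term k n * 'C(n, j)%:R * j`!%:R
  = coef_C j.
Proof.
move=> le_jm.
pose H k := j`!%:R * 'C(k, j)%:R * poch (m%:R - k%:R + 1) (k - j) / k`!%:R
   * (poch a k * poch t k * poch (c - a - m%:R - t) (m - k) / poch (c - b - m%:R) k).
transitivity ((-1) ^+ j * poch b j / poch (c - a - m%:R) m * \sum_(k < m.+1) H k).
  rewrite mulr_sumr; apply: eq_bigr => k _; have le_km := leq_ord k.
  rewrite sum_phat_term_bin //.
  (* b + m - k + 1 reflects to -b - m, the parameter in the prefactor *)
  have := phat_denom_neq0 (leqnn k) le_km.
  rewrite poch_reflect opprD mulf_eq0 negb_or => /andP[_ bmk].
  have ck : poch (c - b - m%:R) k != 0 by apply: poch_neq0_le cbm_neq0.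
  rewrite /phat_prefactor /H.
  by field; rewrite ck natr_fact_neq0 cam_neq0 bmk signr_eq0.
rewrite /coef_C; congr (_ * _).
rewrite (@sum_ord_shift0 _ j m.+1 H (leqW le_jm)) => [|k lt_kj]; last first.
  by rewrite /H bin_small // mulr0 !mul0r.
rewrite subSn //; apply: eq_bigr => i _.
rewrite /H subnDA addKn (_ : m%:R - (j + i)%:R = (m - j)%:R - i%:R :> F); last first.
  by rewrite natrD natrB //; ring.
rewrite poch_nat_ffact.
have -> : j`!%:R * 'C(j + i, j)%:R * ((m - j) ^_ i)%:R / (j + i)`!%:R = 'C(m - j, i)%:R :> F.
  apply: (canLR (mulfK (natr_fact_neq0 F (j + i)))); rewrite -!natrM; congr _%:R.
  by rewrite -bin_ffact -(bin_fact (leq_addr i j)) addKn; ring.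
by rewrite !mulrA.
Qed.

Lemma hypF_3F2_expand (j : nat) : (j <= m)%N ->
  hypF (m - j) [:: - (m%:R) + j%:R; t + j%:R; c - a - b - m%:R]
                 [:: c - a - m%:R + j%:R; c - b - m%:R + j%:R]
  = \sum_(n < (m - j).+1) \sum_(i < (m - j).+1)
      (-1) ^+ n * 'C(m - j, n)%:R * 'C(n, i)%:R * (-1) ^+ i
      * poch (t + j%:R) n / poch (c - a - m%:R + j%:R) n
      * poch (a + j%:R) i / poch (c - b - m%:R + j%:R) i.
Proof.
move=> le_jm; rewrite /hypF; apply: eq_bigr => n _.
have le_n : (n <= m - j)%N by rewrite -ltnS.
set y := c - b - m%:R + j%:R.
have yn : poch y n != 0 by apply: poch_shift_neq0 cbm_neq0; lia.
rewrite !big_cons !big_nil !mulr1.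
rewrite (_ : - (m%:R) + j%:R = - (m - j)%:R :> F); last by rewrite natrB //; ring.
rewrite (_ : c - a - b - m%:R = y - (a + j%:R)); last by rewrite /y; ring.
rewrite [LHS](_ : _ = poch (- (m - j)%:R) n / n`!%:R
    * (poch (t + j%:R) n / poch (c - a - m%:R + j%:R) n)
    * (poch (y - (a + j%:R)) n / poch y n)); last by rewrite !invfM; ring.
rewrite poch_opp_nat_div_fact chu_vandermonde_div //.
rewrite -(@sum_ord_widen0 _ n.+1 (m - j).+1
  (fun i => 'C(n, i)%:R * (-1) ^+ i * poch (a + j%:R) i / poch y i)) //;
  last by move=> i lt_ni; rewrite bin_small // !mul0r.
by rewrite mulr_sumr; apply: eq_bigr => i _; ring.
Qed.

Lemma qhat_coefE (j : nat) : (j <= m)%N ->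
  (-1) ^+ j * poch a j * poch b j * poch t j / (poch (c - a - m%:R) j * poch (c - b - m%:R) j)
  * hypF (m - j) [:: - (m%:R) + j%:R; t + j%:R; c - a - b - m%:R]
                 [:: c - a - m%:R + j%:R; c - b - m%:R + j%:R]
  = coef_C j.
Proof.
move=> le_jm; set x := c - a - m%:R; set y := c - b - m%:R.
have [xj xjN] := poch_split_neq0 le_jm cam_neq0.
have [yj _] := poch_split_neq0 le_jm cbm_neq0.
rewrite hypF_3F2_expand // exchange_big /= mulr_sumr /coef_C mulr_sumr.
apply: eq_bigr => i _; have le_i : (i <= m - j)%N by rewrite -ltnS.
have yji : poch (y + j%:R) i != 0 by apply: poch_shift_neq0 cbm_neq0; lia.
(* the sum over n is Chu-Vandermonde at (x + j) - (t + j) = x - t *)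
have -> : \sum_(n < (m - j).+1)
      (-1) ^+ n * 'C(m - j, n)%:R * 'C(n, i)%:R * (-1) ^+ i
      * poch (t + j%:R) n / poch (x + j%:R) n * poch (a + j%:R) i / poch (y + j%:R) i
  = (-1) ^+ i * poch (a + j%:R) i / poch (y + j%:R) i / poch (x + j%:R) (m - j)
    * ('C(m - j, i)%:R * (-1) ^+ i * poch (t + j%:R) i * poch (x - t) (m - j - i)).
  rewrite (_ : x - t = (x + j%:R) - (t + j%:R)); last by ring.
  rewrite -chu_vandermonde_bin mulr_sumr; apply: eq_bigr => n _.
  have le_n : (n <= m - j)%N by rewrite -ltnS.
  have [xjn xjnN] := poch_split_neq0 le_n xjN.
  by rewrite (poch_split (x + j%:R) le_n); field; rewrite xjn xjnN yji.
rewrite (poch_split x le_jm) (poch_split y (leq_addr i j)) (poch_split a (leq_addr i j)).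
rewrite (poch_split t (leq_addr i j)) !addKn.
(* [field] treats (-1)^i as an atom, so the cancellation of its square is made explicit *)
rewrite -[RHS]mul1r -[X in _ = X * _](sqrr_sign _ i) expr2.
by field; rewrite xj xjN yj yji.
Qed.

Lemma qhat_eq_phat (w : nat -> F) :
  \sum_(k < m.+1) (-1) ^+ k * Cseq w k * poch a k * poch b k * poch t k
      / (poch (c - a - m%:R) k * poch (c - b - m%:R) k)
      * hypF (m - k) [:: - (m%:R) + k%:R; t + k%:R; c - a - b - m%:R]
                     [:: c - a - m%:R + k%:R; c - b - m%:R + k%:R]
  = \sum_(k < m.+1) phat_prefactor k * \sum_(n < k.+1) phat_term k n * w n.
Proof.
transitivity (\sum_(j < m.+1) \sum_(k < m.+1) \sum_(n < m.+1)
    Cseq w j * (phat_prefactor k * (phat_term k n * 'C(n, j)%:R * j`!%:R))).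
  apply: eq_bigr => j _; have le_jm := leq_ord j.
  rewrite (_ : _ * hypF _ _ _ = Cseq w j * coef_C j); last by rewrite -qhat_coefE //; ring.
  by rewrite -phat_coefE // mulr_sumr; apply: eq_bigr => k _; rewrite !mulr_sumr.
rewrite exchange_big; apply: eq_bigr => k _; rewrite exchange_big.
rewrite -(@sum_ord_widen0 _ k.+1 m.+1 (fun n => phat_term k n * w n)) ?ltn_ord //;
  last by move=> n lt_kn; rewrite /phat_term poch_opp_nat_small // !mul0r.
rewrite mulr_sumr; apply: eq_bigr => n _.
rewrite (Cseq_inversion w (leq_ord n)) !mulr_sumr; apply: eq_bigr => j _; ring.
Qed.

End QhatPhat.

Theorem corollary2 (R : realType) (r : nat) (mm : 'I_r -> nat) (f : 'I_r -> R[i])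
  (a b c : R[i]) :
  (0 < r)%N ->
  let m := (\sum_(i < r) mm i)%N in
  poch (c - a - m%:R) m != 0 ->
  poch (c - b - m%:R) m != 0 ->
  poch (1 + a + b - c) m != 0 ->
  (* implicit well-definedness of the displayed hypergeometric series *)
  (forall i : 'I_r, poch (f i) m != 0) ->
  poch (b + 1) m != 0 ->
  let fpm := [seq f i + (mm i)%:R | i : 'I_r] in
  let fs := [seq f i | i : 'I_r] in
  let C := fun k : nat =>
    (-1) ^+ k / (k`!)%:R * hypF k (- k%:R :: fpm) fs in
  forall t : R[i],
    \sum_(k < m.+1)
      (-1) ^+ k * C k * poch a k * poch b k * poch t k
        / (poch (c - a - m%:R) k * poch (c - b - m%:R) k)
        * hypF (m - k) [:: - (m%:R) + k%:R; t + k%:R; c - a - b - m%:R]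
                       [:: c - a - m%:R + k%:R; c - b - m%:R + k%:R]
    =
    \sum_(k < m.+1)
      (-1) ^+ k * poch a k * poch (- b - m%:R) k * poch t k
        * poch (c - a - m%:R - t) (m - k)
        / (poch (c - a - m%:R) m * poch (c - b - m%:R) k * (k`!)%:R)
        * hypF k (- k%:R :: b :: fpm) (b + m%:R - k%:R + 1 :: fs).
Proof.
(* qhat_eq_phat holds for arbitrary weights w. *)
move=> _ m cam_neq0 cbm_neq0 _ _ b1_neq0 fpm fs C t.
pose w n := (\prod_(x <- fpm) poch x n) / (\prod_(y <- fs) poch y n).
have CE k : C k = Cseq w k.
  by rewrite /C /Cseq /hypF; congr (_ * _); apply: eq_bigr => l _; rewrite big_cons /w; ring.
have hypFE k : hypF k (- k%:R :: b :: fpm) (b + m%:R - k%:R + 1 :: fs)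
    = \sum_(n < k.+1) phat_term b m k n * w n.
  by apply: eq_bigr => n _; rewrite !big_cons /phat_term /w !invfM; ring.
under eq_bigr do rewrite CE.
rewrite (qhat_eq_phat t b1_neq0 cam_neq0 cbm_neq0 w).
by apply: eq_bigr => k _; rewrite hypFE.
Qed.
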